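(* Let $n\geq 2$, let $A\in\mathbb{R}^{n\times n}$ be a symmetric matrix and $e\in\mathbb{R}^n$ a vector. Then $$|e|^4|A|^2\geq 2|e|^2|Ae|^2+\frac{\big(|e|^2\operatorname{tr}(A)-\langle e,Ae\rangle\big)^2}{n-1}-\langle e,Ae\rangle^2.$$ If $n=2$, equality holds.
   Context: $|A|$ denotes the Hilbert–Schmidt (Frobenius) norm of $A$, $|A|^2=\operatorname{tr}(A^\intercal A)$. *)

From mathcomp Require Import all_boot all_order all_algebra.
From mathcomp Require Import reals.
Set Implicit Arguments. Unset Strict Implicit. Unset Printing Implicit Defensive.
Import Order.TTheory GRing.Theory Num.Theory.
Local Open Scope ring_scope.

Definition dotv (R : realType) (n : nat) (u v : 'cV[R]_n) : R :=
  \sum_(i < n) u i 0 * v i 0.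

Definition sqnormv (R : realType) (n : nat) (u : 'cV[R]_n) : R := dotv u u.

Definition sqnormHS (R : realType) (n : nat) (A : 'M[R]_n) : R := \tr (A^T *m A).

From mathcomp Require Import all_boot all_order all_algebra.
From mathcomp Require Import reals.
From mathcomp Require Import ring lra.
Set Implicit Arguments. Unset Strict Implicit. Unset Printing Implicit Defensive.
Import Order.TTheory GRing.Theory Num.Theory.
Local Open Scope ring_scope.

(* Let P = |e|^2 I - e e^T, i.e. |e|^2 times the projection onto e^perp.  Since
   P^2 = |e|^2 P and tr P = (n - 1) |e|^2, the Cauchy-Schwarz inequality for the
   Hilbert-Schmidt inner product, applied to P and P A P, reduces to
   tr(P A P)^2 <= (n - 1) |P A P|^2.  Expanding tr(P A P) = |e|^2 (|e|^2 tr A - <e, Ae>)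
   and |P A P|^2 = |e|^4 tr(P A P A) gives the inequality.  For n = 2 the range of
   P is a line, so P A P is a multiple of P and Cauchy-Schwarz is an equality;
   there the identity is checked by expanding entries. *)

Lemma quadratic_ge0_discriminant (R : realFieldType) (a b c : R) :
  0 <= a -> (forall t, 0 <= a * t ^+ 2 - 2 * b * t + c) -> b ^+ 2 <= a * c.
Proof.
move=> a_ge0 q_ge0; pose p := Poly [:: c; - (2 * b); a].
have := @deg_le2_poly_delta_ge0 R p (size_Poly _).
rewrite !coef_Poly /= => /(_ a_ge0) delta_le0.
suff : (- (2 * b)) ^+ 2 - 4 * a * c <= 0 by nra.
apply: delta_le0 => t; rewrite /p !horner_Poly /=.
by have -> : ((0 * t + a) * t - 2 * b) * t + c = a * t ^+ 2 - 2 * b * t + c by ring.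
Qed.

Lemma mxtrace_trmx_mul_ge0 (R : realDomainType) (m n : nat) (X : 'M[R]_(m, n)) :
  0 <= \tr (X^T *m X).
Proof.
apply: sumr_ge0 => i _; rewrite mxE; apply: sumr_ge0 => j _.
by rewrite mxE -expr2 sqr_ge0.
Qed.

Lemma mxtrace_CauchySchwarz (R : realFieldType) (m n : nat) (X Y : 'M[R]_(m, n)) :
  \tr (X^T *m Y) ^+ 2 <= \tr (Y^T *m Y) * \tr (X^T *m X).
Proof.
apply: quadratic_ge0_discriminant => [|t]; first exact: mxtrace_trmx_mul_ge0.
have trYX : \tr (Y^T *m X) = \tr (X^T *m Y) by rewrite -mxtrace_tr trmx_mul trmxK.
have := mxtrace_trmx_mul_ge0 (X - t *: Y).
rewrite [(X - _)^T]linearB /= linearZ /= mulmxBl !mulmxBr -!scalemxAl -!scalemxAr.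
rewrite !raddfB /= !mxtraceZ trYX; lra.
Qed.

Section DotProduct.
Variables (R : realType) (n : nat).
Implicit Types (u v : 'cV[R]_n) (B : 'M[R]_n).

Lemma dotvE u v : dotv u v = (u^T *m v) 0 0.
Proof. by rewrite /dotv mxE; apply: eq_bigr => i _; rewrite mxE. Qed.

Lemma trmx_mul_dotv u v : u^T *m v = (dotv u v)%:M.
Proof. by rewrite [LHS]mx11_scalar dotvE. Qed.

Lemma dotv_mulmxr u v B : dotv u (B *m v) = dotv (B^T *m u) v.
Proof. by rewrite !dotvE trmx_mul trmxK mulmxA. Qed.

Lemma mxtrace_outer_mul u v B : \tr (u *m v^T *m B) = dotv v (B *m u).
Proof. by rewrite -mulmxA mxtrace_mulC -mulmxA trmx_mul_dotv mxtrace_scalar. Qed.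

Lemma dotv0l v : dotv 0 v = 0.
Proof. by rewrite /dotv big1 // => i _; rewrite mxE mul0r. Qed.

Lemma sqnormv_eq0 u : (sqnormv u == 0) = (u == 0).
Proof.
apply/eqP/eqP => [u0|->]; last exact: dotv0l.
apply/matrixP => i j; rewrite ord1 mxE; apply/eqP; rewrite -sqrf_eq0 expr2; apply/eqP.
by apply: (psumr_eq0P _ u0) => // k _; rewrite -expr2 sqr_ge0.
Qed.

End DotProduct.

(* The factor |e|^2 keeps every identity below free of division by |e|^2. *)
Definition oproj (R : realType) (n : nat) (e : 'cV[R]_n) : 'M[R]_n :=
  (sqnormv e)%:M - e *m e^T.

Section OrthogonalProjection.
Variables (R : realType) (n : nat) (e : 'cV[R]_n).
Implicit Types B : 'M[R]_n.
Local Notation s := (sqnormv e).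
Local Notation P := (oproj e).

Lemma trmx_oproj : P^T = P.
Proof. by rewrite /oproj linearB /= tr_scalar_mx trmx_mul trmxK. Qed.

Lemma oproj_sqr : P *m P = s *: P.
Proof.
rewrite /oproj mulmxBl !mulmxBr !mul_scalar_mx mul_mx_scalar.
rewrite mulmxA -(mulmxA e) trmx_mul_dotv mul_mx_scalar -scalemxAl.
by rewrite subrr subr0 scalerBr scale_scalar_mx.
Qed.

Lemma mxtrace_oproj_mul B : \tr (P *m B) = s * \tr B - dotv e (B *m e).
Proof. by rewrite /oproj mulmxBl raddfB /= mul_scalar_mx mxtraceZ mxtrace_outer_mul. Qed.

Lemma mxtrace_oproj : \tr P = s * (n%:R - 1).
Proof. by rewrite -[P]mulmx1 mxtrace_oproj_mul mxtrace1 mul1mx mulrBr mulr1. Qed.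

Lemma sqnormHS_oproj : \tr (P^T *m P) = s ^+ 2 * (n%:R - 1).
Proof. by rewrite trmx_oproj oproj_sqr mxtraceZ mxtrace_oproj mulrA expr2. Qed.

Lemma mxtrace_oproj_compress B : \tr (P^T *m (P *m B *m P)) = s ^+ 2 * \tr (P *m B).
Proof.
rewrite trmx_oproj !mulmxA oproj_sqr -!scalemxAl mxtraceZ mxtrace_mulC.
by rewrite mulmxA oproj_sqr -scalemxAl mxtraceZ mulrA expr2.
Qed.

Lemma sqnormHS_oproj_compress B :
  \tr ((P *m B *m P)^T *m (P *m B *m P)) = s ^+ 2 * \tr (P *m B^T *m P *m B).
Proof.
rewrite !trmx_mul trmx_oproj !mulmxA -(mulmxA _ P P) oproj_sqr -scalemxAr.
rewrite -!scalemxAl mxtraceZ mxtrace_mulC !mulmxA oproj_sqr -!scalemxAl mxtraceZ.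
by rewrite mulrA expr2.
Qed.

Lemma mxtrace_oproj_mul_sqr B : B^T = B ->
  \tr (P *m B *m P *m B) =
  s ^+ 2 * \tr (B^T *m B) - 2 * s * sqnormv (B *m e) + dotv e (B *m e) ^+ 2.
Proof.
move=> symB; have PB : P *m B = s *: B - e *m e^T *m B.
  by rewrite /oproj mulmxBl mul_scalar_mx.
have EBE : e *m e^T *m B *m (e *m e^T) = dotv e (B *m e) *: (e *m e^T).
  rewrite !mulmxA -(mulmxA (e *m e^T)) -(mulmxA e) trmx_mul_dotv.
  by rewrite mul_mx_scalar -scalemxAl.
have eBBe : dotv e (B *m B *m e) = sqnormv (B *m e).
  by rewrite -mulmxA dotv_mulmxr symB.
rewrite -mulmxA PB mulmxBl !mulmxBr !raddfB /= -!scalemxAl -!scalemxAr !mxtraceZ.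
rewrite [\tr (B *m (e *m _ *m _))]mxtrace_mulC [_ *m (e *m e^T *m B)]mulmxA EBE.
rewrite -scalemxAl mxtraceZ.
rewrite -[e *m e^T *m B *m B]mulmxA !mxtrace_outer_mul eBBe symB; ring.
Qed.

End OrthogonalProjection.

Lemma sqr_mxtrace_oproj_mul_le (R : realType) (n : nat) (A : 'M[R]_n) (e : 'cV[R]_n) :
  A^T = A ->
  (sqnormv e * \tr A - dotv e (A *m e)) ^+ 2 <=
  (n%:R - 1) * (sqnormv e ^+ 2 * sqnormHS A - 2 * sqnormv e * sqnormv (A *m e)
                + dotv e (A *m e) ^+ 2).
Proof.
move=> symA; have [/eqP|s_neq0] := eqVneq (sqnormv e) 0.
  rewrite sqnormv_eq0 => /eqP->.
  by rewrite mulmx0 /sqnormv !dotv0l; nra.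
have := mxtrace_CauchySchwarz (oproj e) (oproj e *m A *m oproj e).
rewrite mxtrace_oproj_compress sqnormHS_oproj sqnormHS_oproj_compress symA.
rewrite mxtrace_oproj_mul mxtrace_oproj_mul_sqr // -/(sqnormHS A) => CS.
have s4_gt0 : 0 < sqnormv e ^+ 4 by rewrite exprn_even_gt0.
rewrite -(ler_pM2l s4_gt0); lra.
Qed.

Lemma sqnormHS_sym_dim2 (R : realType) (A : 'M[R]_2) (e : 'cV[R]_2) : A^T = A ->
  sqnormv e ^+ 2 * sqnormHS A =
  2 * sqnormv e * sqnormv (A *m e) + (sqnormv e * \tr A - dotv e (A *m e)) ^+ 2
  - dotv e (A *m e) ^+ 2.
Proof.
move=> /matrixP/(_ ord0 (lift ord0 ord0)); rewrite mxE => symA.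
rewrite /sqnormHS /sqnormv /dotv /mxtrace !(mxE, big_ord_recl, big_ord0) -symA.
ring.
Qed.

Theorem lemma2p1 (R : realType) (n : nat) (hn : (2 <= n)%N)
    (A : 'M[R]_n) (e : 'cV[R]_n) (hA : A^T = A) :
  let eAe := dotv e (A *m e) in
  (sqnormv e) ^+ 2 * sqnormHS A >=
    2 * sqnormv e * sqnormv (A *m e)
    + (sqnormv e * \tr A - eAe) ^+ 2 / (n%:R - 1)
    - eAe ^+ 2
  /\ (n = 2%N ->
    (sqnormv e) ^+ 2 * sqnormHS A =
    2 * sqnormv e * sqnormv (A *m e)
    + (sqnormv e * \tr A - eAe) ^+ 2 / (n%:R - 1)
    - eAe ^+ 2).
Proof.
rewrite /=; split=> [|n2].
  have n1_gt0 : 0 < n%:R - 1 :> R by rewrite subr_gt0 ltr1n.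
  by have := sqr_mxtrace_oproj_mul_le e hA; rewrite -ler_pdivrMl //; lra.
by subst n; rewrite -[2%:R]/(1 + 1 : R) addrK divr1 sqnormHS_sym_dim2.
Qed.
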